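(* Let $N$ be a coupled $s$-square network with at least two reactions, none of which is an inflow or outflow reaction, in which every species has total molecularity at most two, and suppose $\operatorname{Or}(N)\ne0$. Then every reaction of $N$ has the form $A+B\to0$ or $A\to B$ for two distinct species $A,B$ of $N$.
   Context: A square ($s$-square) network is a list of $s$ reactions $y_k\to y'_k$ ($y_k,y'_k\in\mathbb{Z}^s_{\ge0}$, $y_k\ne y'_k$) on $s$ species, each species occurring in some complex. Inflow/outflow reactions are $0\to X_i$ and $X_i\to 0$. A network is coupled if its reactions cannot be split into two nonempty sets involving disjoint sets of species. Total molecularity: list the non-flow reactions as non-reversible ones $y_j\to y_j'$ plus each reversible pair $y_j\rightleftarrows y_j'$ once; $\operatorname{TM}(X_i)=\sum_j(y_{ji}+y'_{ji})$. Orientation: $\operatorname{Or}(N)=\operatorname{sign}(\det M\det R)$ where $M$ has rows $y_k$ and $R$ has rows $y_k-y'_k$. *)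

From HB Require Import structures.
From mathcomp Require Import all_boot all_order all_algebra.
Set Implicit Arguments. Unset Strict Implicit. Unset Printing Implicit Defensive.
Import Order.TTheory GRing.Theory Num.Theory.

(* An s-square network: s reactions k : 'I_s on s species i : 'I_s;
   reaction k is  y k -> yp k,  with (y k i) the stoichiometric coefficient
   of species i in the source complex and (yp k i) in the product complex. *)

Section Network.
Variables (s : nat) (y yp : 'I_s -> 'I_s -> nat).

Definition involved (k i : 'I_s) : bool := (0 < y k i) || (0 < yp k i).

Definition square_network : Prop :=
  (forall k : 'I_s, exists j, y k j <> yp k j) /\
  (forall i : 'I_s, exists k, involved k i).

Definition is_inflow (k : 'I_s) : bool :=
  [forall j, y k j == 0] && [exists i, [forall j, yp k j == (j == i) :> nat]].
Definition is_outflow (k : 'I_s) : bool :=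
  [forall j, yp k j == 0] && [exists i, [forall j, y k j == (j == i) :> nat]].
Definition is_flow (k : 'I_s) : bool := is_inflow k || is_outflow k.

Definition is_rev_of (l k : 'I_s) : bool :=
  [forall j, (y l j == yp k j) && (yp l j == y k j)].

Definition coupled : Prop :=
  forall P : {set 'I_s}, P != set0 -> P != setT ->
    exists k l i, [/\ k \in P, l \notin P, involved k i & involved l i].

(* total molecularity: sum over non-flow reactions, a reversible pair being
   counted once (the later member of a reversible pair is skipped) *)
Definition TM (i : 'I_s) : nat :=
  \sum_(k < s | ~~ is_flow k && ~~ [exists l : 'I_s, (l < k) && is_rev_of l k])
     (y k i + yp k i).

Definition Mmx : 'M[int]_s := \matrix_(k, i) ((y k i)%:Z)%R.
Definition Rmx : 'M[int]_s := \matrix_(k, i) ((y k i)%:Z - (yp k i)%:Z)%R.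

Definition Or : int := Num.sg (\det Mmx * \det Rmx)%R.

End Network.

From HB Require Import structures.
From mathcomp Require Import all_boot all_order all_algebra.
From mathcomp Require Import zify.
Import Order.TTheory GRing.Theory Num.Theory.

Set Implicit Arguments.
Unset Strict Implicit.
Unset Printing Implicit Defensive.

(* A nonzero orientation forces  det M != 0  and  det R != 0.
   The first says that no source complex is empty; the second that no
   reaction is the reverse of another (two rows of R would be opposite), so
   TM(X) counts every reaction:  TM(X) = sum_k (y_kX + y'_kX).  A non-flow
   reaction with nonempty source has  |y_k| + |y'_k| >= 2.  Double counting
   gives  sum_k (|y_k| + |y'_k|) = sum_X TM(X) <= 2s,  so every reaction has
   exactly two molecules in total: it is  2A -> 0,  A + B -> 0  or  A -> B
   (A <> B, since y_k <> y'_k).  In  2A -> 0  the species A is saturated, so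
   it occurs in no other reaction and A is the only species of that reaction;
   this contradicts coupling, as there is a second reaction. *)

Section NatSums.
Variable I : finType.
Implicit Types f : I -> nat.

Lemma sum_nat_eq1_indicator f :
  \sum_i f i = 1 -> exists a, forall j, f j = (j == a).
Proof.
move/eqP/sum_nat_eq1 => [a [_ fa1 f0]]; exists a => j.
by case: (eqVneq j a) => [->|ja]; [rewrite fa1 | rewrite f0].
Qed.

Lemma sum_nat_eq2_cases f : \sum_i f i = 2 ->
  (exists a, forall j, f j = (j == a) * 2) \/
  (exists a b, a != b /\ forall j, f j = (j == a) + (j == b)).
Proof.
move=> sum2.
have [a fa0] : exists a, f a != 0.
  apply/existsP; rewrite -negb_forall -(sum_nat_eq0 predT) /=; by rewrite sum2.
move: sum2; rewrite (bigD1 a) //=; set rest := \sum_(j | j != a) f j => sum2.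
have [fa2|fa1] : f a = 2 \/ f a = 1 by lia.
- left; exists a => j; case: (eqVneq j a) => [->|ja]; first by rewrite fa2.
  have /eqP : rest = 0 by lia.
  by rewrite sum_nat_eq0 => /forall_inP/(_ j ja)/eqP.
- right; have /eqP/sum_nat_eq1 [b [ba fb1 f0]] : rest = 1 by lia.
  exists a, b; split; first by rewrite eq_sym.
  move=> j; case: (eqVneq j a) => [->|ja]; first by rewrite fa1 eq_sym (negbTE ba).
  by case: (eqVneq j b) => [->|jb]; [rewrite fb1 | rewrite f0].
Qed.

Lemma sum_lower_bound_tight f m :
  (forall i, m <= f i) -> \sum_i f i <= #|I| * m -> forall i, f i = m.
Proof.
move=> lb ub i; have := @leqif_sum I predT (fun i => m == f i) (fun=> m) f.
rewrite sum_nat_const /= => /(_ (fun i _ => leqif_eq (lb i))) [_].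
have -> : (#|I| * m == \sum_i f i) by rewrite eqn_leq ub -sum_nat_const leq_sum.
by move/esym/forallP/(_ i)/eqP.
Qed.

End NatSums.

Lemma card_gt1_other (T : finType) (x : T) : 1 < #|T| -> exists z, z != x.
Proof.
move=> /card_gt1P [u [v [_ _ uv]]].
by case: (eqVneq u x) => [ux|]; [exists v; rewrite -ux eq_sym | exists u].
Qed.

Section Determinants.
Variables (R : comPzRingType) (n : nat).
Local Open Scope ring_scope.
Implicit Type A : 'M[R]_n.

Lemma det_zero_row A k : (forall j, A k j = 0) -> \det A = 0.
Proof.
move=> row0; rewrite (expand_det_row _ k) big1 // => j _.
by rewrite row0 mul0r.
Qed.

Lemma det_proportional_rows A l k c :
  l != k -> (forall j, A l j = c * A k j) -> \det A = 0.
Proof.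
move=> lk Al.
pose B := \matrix_(a, j) (if a == l then A k j else A a j).
have detB : \det B = 0.
  by apply: (determinant_alternate lk) => j; rewrite !mxE eqxx eq_sym (negbTE lk).
rewrite (determinant_multilinear (i0 := l) (B := B) (C := A) (b := c) (c := 0)).
- by rewrite detB mulr0 mul0r addr0.
- by rewrite scale0r addr0; apply/rowP => j; rewrite !mxE eqxx Al.
- by apply/matrixP => a j; rewrite !mxE eq_sym (negbTE (neq_lift _ _)).
- by [].
Qed.

End Determinants.

Section Network.
Variables (s : nat) (y yp : 'I_s -> 'I_s -> nat).

Definition source_size (k : 'I_s) : nat := \sum_i y k i.
Definition product_size (k : 'I_s) : nat := \sum_i yp k i.

Lemma Or_neq0_det :
  (Or y yp != 0 -> \det (Mmx y) != 0 /\ \det (Rmx y yp) != 0)%R.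
Proof. by rewrite /Or sgr_eq0 mulf_eq0 negb_or => /andP. Qed.

Lemma source_nonempty k : (\det (Mmx y) != 0)%R -> 0 < source_size k.
Proof.
apply: contraNT; rewrite -eqn0Ngt sum_nat_eq0 => /forallP y0.
by apply/eqP; apply: (det_zero_row (k := k)) => j; rewrite mxE (eqP (y0 j)).
Qed.

(* If R is nonsingular and reactions are nontrivial, no reaction is the
   reverse of another one (the two rows of R would be opposite). *)
Lemma no_reverse :
  (forall k, exists j, y k j <> yp k j) -> (\det (Rmx y yp) != 0)%R ->
  forall l k, ~~ is_rev_of y yp l k.
Proof.
move=> nontriv detR l k; apply/forallP => rev.
have yl j : y l j = yp k j by have /andP[/eqP] := rev j.
have ypl j : yp l j = y k j by have /andP[_ /eqP] := rev j.
case: (eqVneq l k) => [lk|lk].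
  by subst l; have [j []] := nontriv k; rewrite yl.
move/eqP: detR; apply; apply: (det_proportional_rows (c := -1) lk) => j.
by rewrite !mxE yl ypl mulN1r opprB.
Qed.

Lemma TM_counts_all i :
  (forall k, ~~ is_flow y yp k) -> (forall l k, ~~ is_rev_of y yp l k) ->
  TM y yp i = \sum_k (y k i + yp k i).
Proof.
move=> noflow norev; apply: eq_bigl => k.
rewrite (negbTE (noflow k)) /= negb_exists; apply/forallP => l.
by rewrite (negbTE (norev l k)) andbF.
Qed.

Lemma sum_reaction_sizes :
  \sum_k (source_size k + product_size k) = \sum_i \sum_k (y k i + yp k i).
Proof. by rewrite exchange_big; apply: eq_bigr => k _; rewrite big_split. Qed.

(* A non-flow reaction with nonempty source has at least two molecules:
   a single source molecule with an empty product would be an outflow. *)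
Lemma reaction_size_ge2 k :
  ~~ is_flow y yp k -> 0 < source_size k -> 2 <= source_size k + product_size k.
Proof.
move=> noflow src; rewrite leqNgt; apply: contra noflow => small.
have /sum_nat_eq1_indicator [a ya] : source_size k = 1 by lia.
have /eqP : product_size k = 0 by lia.
rewrite sum_nat_eq0 => yp0; apply/orP; right; apply/andP; split=> //.
by apply/existsP; exists a; apply/forallP => j; rewrite ya.
Qed.

Lemma coupled_shares_species k :
  coupled y yp -> (exists l, l != k) ->
  exists l i, [/\ l != k, involved y yp k i & involved y yp l i].
Proof.
move=> coup [l lk].
have [||k' [l' [i [k'k l'k ik il]]]] := coup [set k].
- by apply/set0Pn; exists k; rewrite set11.
- by apply/eqP => /setP/(_ l); rewrite !inE (negbTE lk).
move: k'k l'k; rewrite !inE => /eqP E l'k; subst k'.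
by exists l', i.
Qed.

Lemma saturated_species a k :
  \sum_l (y l a + yp l a) <= 2 -> 2 <= y k a + yp k a ->
  forall l, l != k -> ~~ involved y yp l a.
Proof.
move=> tot ka l lk; rewrite (bigD1 k) //= (bigD1 l) //= in tot.
by rewrite /involved negb_or -!eqn0Ngt; apply/andP; split; apply/eqP; lia.
Qed.

End Network.

Theorem mainTheorem9 (s : nat) (y yp : 'I_s -> 'I_s -> nat) :
  square_network y yp ->
  coupled y yp ->
  (2 <= s)%N ->
  (forall k : 'I_s, ~~ is_flow y yp k) ->
  (forall i : 'I_s, (TM y yp i <= 2)%N) ->
  Or y yp != 0%R ->
  forall k : 'I_s, exists A B : 'I_s, A != B /\
    ((forall j, y k j = ((j == A) + (j == B))%N /\ yp k j = 0%N) \/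
     (forall j, y k j = (j == A) :> nat /\ yp k j = (j == B) :> nat)).
Proof.
move=> [nontriv _] coup s2 noflow TM2 /Or_neq0_det [detM detR] k.
have species_le2 i : \sum_l (y l i + yp l i) <= 2.
  by rewrite -TM_counts_all // => l m; apply: no_reverse.
have size2 : source_size y k + product_size yp k = 2.
  apply: (sum_lower_bound_tight (f := fun l => source_size y l + product_size yp l)).
  - by move=> l; apply: reaction_size_ge2 => //; apply: source_nonempty.
  - rewrite sum_reaction_sizes (@leq_trans (\sum_(i < s) 2)) //.
      by apply: leq_sum => i _; apply: species_le2.
    by rewrite sum_nat_const.
have [[src2 prod0]|[src1 prod1]] : (source_size y k = 2 /\ product_size yp k = 0) \/
    (source_size y k = 1 /\ product_size yp k = 1).
  by have := source_nonempty k detM; lia.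
- have yp0 j : yp k j = 0 by move/eqP: prod0; rewrite sum_nat_eq0 => /forallP/(_ j)/eqP.
  have [[a ya]|[a [b [ab yab]]]] := sum_nat_eq2_cases src2; last first.
    by exists a, b; split=> //; left.
  have other : exists l, l != k by apply: card_gt1_other; rewrite card_ord.
  have [l' [i [l'k ki l'i]]] := coupled_shares_species coup other.
  have ia : i = a by move: ki; rewrite /involved yp0 ya orbF; case: eqVneq.
  move: l'i; rewrite ia (negbTE (saturated_species (species_le2 a) _ l'k)) //.
  by rewrite ya yp0 eqxx.
- have [a ya] := sum_nat_eq1_indicator src1.
  have [b ypb] := sum_nat_eq1_indicator prod1.
  exists a, b; split; last by right.
  by apply: contraPneq (nontriv k) => ab [j []]; rewrite ya ypb ab.
Qed.
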